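(* Let $A$, $Q$, $H\subseteq A^Q$ be non-empty finite sets, $n\ge3$, $\mathcal F$ a clone with carrier $A$ satisfying $\Delta^s_n$, and suppose $H\in\mathrm{Inv}_Q\mathcal F$. Let $P=\{p,q\}\in[Q]^2$ with $P\not\subseteq Q^{(n)}_H$. Then either (1) $H|_P=\{g\in A^P:g(p)\in H(p),\ g(q)\in H(q)\}$, or (2) there is $\sigma\in S_A$ with $H|_P=\{g\in A^P: g(p)\in H(p),\ g(q)\in H(q),\ g(q)=\sigma(g(p))\}$.
   Context: $\mathcal O(A)=\bigcup_{n<\omega}A^{A^n}$; $\mathcal F_{[n]}=\mathcal F\cap A^{A^n}$; $\mathrm{ran}\,\mathbf x$ is the set of entries of $\mathbf x\in A^n$; $A^n_k=\{\mathbf x\in A^n:|\mathrm{ran}\,\mathbf x|=k\}$, $A^n_{<n}=\bigcup_{k<n}A^n_k$. A clone with carrier $A$ is a subset of $\mathcal O(A)$ containing all projections and closed under composition. For $f\in\mathcal O(A)_{[m]}$, $h_i\in A^Q$, $f(h_0,\dots,h_{m-1})$ is $q\mapsto f(h_0(q)\dots h_{m-1}(q))$; $\mathrm{Inv}_Q\mathcal F$ is the set of $H\subseteq A^Q$ closed under such compositions with $f\in\mathcal F$. $H(q)=\{h(q):h\in H\}$, $H|_P=\{h|_P:h\in H\}$, $[Q]^2$ the 2-element subsets of $Q$, $S_A$ the permutations of $A$, $Q^{(n)}_H=\{q\in Q:|H(q)|<n\}$. $\mathcal F$ satisfies $\Delta^s_n$ if there is $i<n$ such that for every $\mathbf a\in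 A^n_n$ and $a\in\mathrm{ran}\,\mathbf a$ there is $s\in\mathcal F_{[n]}$ with $s(\mathbf a)=a$ and $s(\mathbf x)=x_i$ for all $\mathbf x\in A^n_{<n}$. *)

From mathcomp Require Import all_boot all_fingroup.
Set Implicit Arguments. Unset Strict Implicit. Unset Printing Implicit Defensive.

Section Defs.
Variable A : finType.

Definition op (k : nat) := {ffun {ffun 'I_k -> A} -> A}.

Definition is_clone (F : forall k, {set op k}) : Prop :=
  (forall k (i : 'I_k), [ffun x : {ffun 'I_k -> A} => x i] \in F k) /\
  (forall m k (f : op m) (g : 'I_m -> op k),
      f \in F m -> (forall i, g i \in F k) ->
      [ffun x : {ffun 'I_k -> A} => f [ffun i => g i x]] \in F k).

Definition ran k (x : {ffun 'I_k -> A}) : {set A} := [set x i | i : 'I_k].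

Definition DeltaS (n : nat) (F : forall k, {set op k}) : Prop :=
  exists i : 'I_n, forall a : {ffun 'I_n -> A}, #|ran a| = n ->
    forall b, b \in ran a ->
      exists2 s : op n, s \in F n &
        s a = b /\ forall x : {ffun 'I_n -> A}, #|ran x| < n -> s x = x i.

Variable Q : finType.

Definition inInv (F : forall k, {set op k}) (H : {set {ffun Q -> A}}) : Prop :=
  forall m (f : op m) (h : 'I_m -> {ffun Q -> A}),
    f \in F m -> (forall i, h i \in H) ->
    [ffun q => f [ffun i => h i q]] \in H.

Definition proj (H : {set {ffun Q -> A}}) (q : Q) : {set A} := [set h q | h : {ffun Q -> A} in H].

Definition Qn (H : {set {ffun Q -> A}}) (n : nat) : {set Q} :=
  [set q | #|proj H q| < n].

Definition restr (H : {set {ffun Q -> A}}) (P : {set Q}) :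
  {set {ffun {x : Q | x \in P} -> A}} :=
  [set [ffun x : {x : Q | x \in P} => h (val x)] | h : {ffun Q -> A} in H].

Definition pt1 (p q : Q) : {x : Q | x \in [set p; q]} := exist _ p (set21 p q).
Definition pt2 (p q : Q) : {x : Q | x \in [set p; q]} := exist _ q (set22 p q).
End Defs.

(* Write R for the binary relation {(h p, h q) | h in H} on A, so that H|_{p,q}
   is R viewed as a set of functions on {p,q}, H(p) is the domain of R and
   H(q) its codomain.

   - Algebra.  Every operation of the clone preserves R (because H is
     invariant), and so does its converse.  Feeding an operation s from
     Delta^s_n with an injective n-tuple u and a non-injective n-tuple v that
     are R-related coordinatewise, s sends u to any prescribed entry x of u and
     v to its i-th entry, which after permuting coordinates can be any entry y
     of v.  Hence R x y: we call R "n-absorbing".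
   - Combinatorics.  If R and its converse are n-absorbing (n >= 3) and the
     domain or codomain of R has at least n elements, then R is either
     dom R x cod R, or the graph of a bijection dom R -> cod R, which extends
     to a permutation of A.  If two points share an image, absorbing along
     suitable 3-element configurations padded to size n forces fullness;
     otherwise the same argument for the converse shows R is a bijection. *)

From mathcomp Require Import all_boot all_fingroup zify.
Set Implicit Arguments. Unset Strict Implicit. Unset Printing Implicit Defensive.

Lemma all2_nth (T : Type) (r : rel T) (d : T) (s t : seq T) :
  all2 r s t -> forall k, k < size s -> r (nth d s k) (nth d t k).
Proof.
elim: s t => [|x s IHs] [|y t] //= /andP[rxy rst] [|k] //= /IHs; exact.
Qed.

Lemma pad_uniq (T : finType) (S : {set T}) (s : seq T) (n : nat) :
  uniq s -> size s <= n <= #|S| ->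
  exists2 t : seq T, {subset t <= S} & uniq (s ++ t) /\ size (s ++ t) = n.
Proof.
move=> us /andP[sn nS].
have le_rest : n - size s <= #|S :\: [set x in s]|.
  have : #|S :&: [set x in s]| <= size s.
    by rewrite (leq_trans (subset_leq_card (subsetIr _ _))) // cardsE card_size.
  rewrite cardsD; lia.
exists (take (n - size s) (enum (S :\: [set x in s]))).
  by move=> x /mem_take; rewrite mem_enum inE => /andP[].
rewrite size_cat size_takel -?cardE // cat_uniq us take_uniq ?enum_uniq // andbT.
split; last by lia.
by apply/hasPn => x /mem_take; rewrite mem_enum !inE => /andP[].
Qed.

(* A map injective on X agrees on X with some permutation of the whole type:
   the complements of X and of its image have the same size and are matched
   through their enumerations. *)
Lemma extend_to_perm (T : finType) (X : {set T}) (f : T -> T) :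
  {in X &, injective f} -> exists sigma : {perm T}, {in X, f =1 sigma}.
Proof.
move=> finj; set sX := enum (~: X); set sY := enum (~: (f @: X)).
have size_s : size sX = size sY.
  rewrite /sX /sY -!cardE; have := cardsC X; have := cardsC (f @: X).
  by rewrite card_in_imset //; lia.
have in_sX a : a \notin X -> index a sX < size sY.
  by move=> aX; rewrite -size_s index_mem mem_enum inE.
pose g a := if a \in X then f a else nth a sY (index a sX).
have g_out a : a \notin X -> g a \notin f @: X.
  move=> aX; rewrite /g (negbTE aX).
  by have := mem_nth a (in_sX a aX); rewrite mem_enum inE.
have g_in a : a \in X -> g a \in f @: X by move=> aX; rewrite /g aX imset_f.
have ginj : injective g.
  move=> a1 a2; case: (boolP (a1 \in X)) => a1X; case: (boolP (a2 \in X)) => a2X.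
  - by rewrite /g a1X a2X; apply: finj.
  - by move=> e; have := g_out _ a2X; rewrite -e g_in.
  - by move=> e; have := g_out _ a1X; rewrite e g_in.
  rewrite /g (negbTE a1X) (negbTE a2X) (set_nth_default a1 a2 (in_sX _ a2X)).
  move/eqP; rewrite nth_uniq ?enum_uniq ?in_sX // => /eqP e.
  by rewrite -[a1](nth_index a1 (_ : a1 \in sX)) ?e ?nth_index // mem_enum inE.
by exists (perm ginj) => a aX; rewrite permE /g aX.
Qed.

Section Absorption.
Variable A : finType.
Implicit Types (R : rel A) (n : nat).

Definition converse R : rel A := fun a b => R b a.

Definition injective_rel R := forall a1 a2 c, R a1 c -> R a2 c -> a1 = a2.
Definition functional_rel R := forall a b1 b2, R a b1 -> R a b2 -> b1 = b2.

Definition rdom R : {set A} := [set a | [exists b, R a b]].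
Definition rcod R : {set A} := [set b | [exists a, R a b]].

Definition absorbing n R :=
  forall u v : seq A, size u = n -> uniq u -> ~~ uniq v -> all2 R u v ->
  forall x y, x \in u -> y \in v -> R x y.

Lemma rdomP R a : reflect (exists b, R a b) (a \in rdom R).
Proof. by rewrite inE; apply: existsP. Qed.

Lemma rcodP R b : reflect (exists a, R a b) (b \in rcod R).
Proof. by rewrite inE; apply: existsP. Qed.

Section Dichotomy.
Variables (n : nat) (R : rel A).
Hypotheses (n_ge3 : 3 <= n) (absR : absorbing n R) (large : n <= #|rdom R|).

Definition image_of a := odflt a [pick b | R a b].

Lemma image_ofP a : a \in rdom R -> R a (image_of a).
Proof.
rewrite /image_of; case: pickP => [//|noR] /rdomP[b].
by rewrite noR.
Qed.

Lemma all2_image_of t : {subset t <= rdom R} -> all2 R t (map image_of t).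
Proof.
elim: t => //= a t IHt tdom; rewrite image_ofP ?tdom ?mem_head //=.
by apply: IHt => z zt; rewrite tdom // inE zt orbT.
Qed.

(* Absorption for three distinct domain points whose images are not distinct:
   pad the triple to an injective n-tuple in the domain, with chosen images. *)
Lemma absorb3 a1 a2 a3 b1 b2 b3 : uniq [:: a1; a2; a3] ->
  R a1 b1 -> R a2 b2 -> R a3 b3 -> ~~ uniq [:: b1; b2; b3] ->
  forall x y, x \in [:: a1; a2; a3] -> y \in [:: b1; b2; b3] -> R x y.
Proof.
move=> ua r1 r2 r3 nub x y xa yb.
have size3 : size [:: a1; a2; a3] <= n <= #|rdom R| by rewrite n_ge3 large.
have [t tdom [ut szt]] := pad_uniq ua size3.
apply: (absR (u := [:: a1; a2; a3] ++ t) (v := [:: b1; b2; b3] ++ map image_of t)) => //.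
- by apply: contra nub; rewrite cat_uniq => /andP[].
- by rewrite /= r1 r2 r3 all2_image_of.
- by rewrite mem_cat xa.
- by rewrite mem_cat yb.
Qed.

(* If two distinct points a1, a2 share an image c, R is the full product:
   first every a is related to c (absorb a1, a2, a with images c, c, _), then
   for b with preimage a' != a, absorb a', a, a3 with images b, c, c. *)
Lemma full_of_shared_image a1 a2 c : a1 != a2 -> R a1 c -> R a2 c ->
  forall a b, a \in rdom R -> b \in rcod R -> R a b.
Proof.
move=> a12 r1 r2.
have to_c a : a \in rdom R -> R a c.
  move=> adom; case: (eqVneq a a1) => [-> //|a1a]; case: (eqVneq a a2) => [-> //|a2a].
  apply: (absorb3 (b3 := image_of a) _ r1 r2 (image_ofP adom)).
  - by rewrite /= !inE negb_or a12 eq_sym a1a eq_sym a2a.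
  - by rewrite /= inE eqxx.
  - by rewrite !inE eqxx !orbT.
  - by rewrite inE eqxx.
move=> a b adom /rcodP[a' ra'b]; case: (eqVneq a a') => [-> //|aa'].
have : 0 < #|rdom R :\: [set a'; a]|.
  have : #|rdom R :&: [set a'; a]| <= 2.
    by rewrite (leq_trans (subset_leq_card (subsetIr _ _))) // cards2 ltnS leq_b1.
  rewrite cardsD; lia.
case/card_gt0P => a3; rewrite in_setD in_set2 negb_or => /andP[/andP[a3a' a3a] a3dom].
apply: (absorb3 _ ra'b (to_c a adom) (to_c a3 a3dom)).
- by rewrite /= !inE negb_or eq_sym aa' eq_sym a3a' eq_sym a3a.
- by rewrite /= !inE eqxx !(orbT, andbF).
- by rewrite !inE eqxx orbT.
- by rewrite inE eqxx.
Qed.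

End Dichotomy.

Definition product_or_perm R :=
  (forall a b, a \in rdom R -> b \in rcod R -> R a b) \/
  exists sigma : {perm A}, forall a b, R a b = [&& a \in rdom R, b \in rcod R & b == sigma a].

Lemma product_or_perm_converse R : product_or_perm (converse R) -> product_or_perm R.
Proof.
case=> [full|[sigma Rsigma]]; [left=> a b adom bcod; exact: full|right].
exists sigma^-1%g => a b; rewrite [R a b]Rsigma andbCA; congr [&& _, _ & _].
by apply/eqP/eqP=> ->; rewrite ?permK ?permKV.
Qed.

Lemma image_of_inj R : injective_rel R -> {in rdom R &, injective (image_of R)}.
Proof.
move=> unshared x1 x2 x1dom x2dom e.
by apply: (unshared _ _ _ (image_ofP x1dom)); rewrite e image_ofP.
Qed.

(* When no two points share an image, the converse argument shows that no
   point has two images either: otherwise the converse is a full product,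
   and two domain points would share an image. *)
Lemma functional_of_injective n R : 3 <= n -> absorbing n (converse R) ->
  n <= #|rdom R| -> injective_rel R -> functional_rel R.
Proof.
move=> n_ge3 absC large unshared a b1 b2 r1 r2; apply/eqP/negPn/negP => b12.
have img_inj := image_of_inj unshared.
have large_cod : n <= #|rcod R|.
  rewrite (leq_trans large) // -(card_in_imset img_inj) subset_leq_card //.
  by apply/subsetP=> _ /imsetP[x xdom ->]; apply/rcodP; exists x; apply: image_ofP.
have fullC := full_of_shared_image n_ge3 absC large_cod b12 r1 r2.
have [x1 [x2 [x1dom x2dom x12]]] : exists x1 x2, [/\ x1 \in rdom R, x2 \in rdom R & x1 != x2].
  by apply/card_gt1P; lia.
have [y ycod] : exists y, y \in rcod R by apply/card_gt0P; lia.
by move/eqP: x12; apply; apply: (unshared _ _ y); apply: fullC.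
Qed.

Lemma perm_of_bijective_rel R : injective_rel R -> functional_rel R ->
  exists sigma : {perm A}, forall a b, R a b = [&& a \in rdom R, b \in rcod R & b == sigma a].
Proof.
move=> unshared functional.
have [sigma sigmaE] := extend_to_perm (image_of_inj unshared).
exists sigma => a b; apply/idP/and3P => [rab|[adom _ /eqP ->]].
  have adom : a \in rdom R by apply/rdomP; exists b.
  split=> //; first by apply/rcodP; exists a.
  by rewrite -sigmaE // (functional _ _ _ (image_ofP adom) rab).
by rewrite -sigmaE // image_ofP.
Qed.

Lemma absorbing_product_or_perm n R : 3 <= n -> absorbing n R -> absorbing n (converse R) ->
  n <= #|rdom R| -> product_or_perm R.
Proof.
move=> n_ge3 absR absC large.
case: (boolP [exists a1, exists a2, exists c, [&& a1 != a2, R a1 c & R a2 c]]).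
  case/existsP=> a1 /existsP[a2 /existsP[c /and3P[a12 r1 r2]]].
  by left; apply: (full_of_shared_image n_ge3 absR large a12 r1 r2).
move=> no_shared; right.
have unshared : injective_rel R.
  move=> a1 a2 c r1 r2; apply/eqP; apply: contraNT no_shared => a12.
  by apply/existsP; exists a1; apply/existsP; exists a2; apply/existsP; exists c; rewrite a12 r1 r2.
exact/perm_of_bijective_rel/(functional_of_injective n_ge3 absC large unshared).
Qed.

Lemma absorbing_product_or_perm_sym n R : 3 <= n -> absorbing n R -> absorbing n (converse R) ->
  n <= #|rdom R| \/ n <= #|rcod R| -> product_or_perm R.
Proof.
move=> n_ge3 absR absC [large|large]; first exact: absorbing_product_or_perm n_ge3 absR absC large.
exact/product_or_perm_converse/(absorbing_product_or_perm n_ge3 absC absR large).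
Qed.

End Absorption.

Section DeltaAbsorption.
Variables (A : finType) (n : nat).

Definition preserves (s : op A n) (R : rel A) :=
  forall u v : {ffun 'I_n -> A}, (forall j, R (u j) (v j)) -> R (s u) (s v).

Lemma preserves_converse s R : preserves s R -> preserves s (converse R).
Proof. by move=> sR u v uv; apply: sR. Qed.

Definition place (i i0 : 'I_n) (d : A) (s : seq A) : {ffun 'I_n -> A} :=
  [ffun j => nth d s (tperm i i0 j)].

Lemma place_i i i0 d s : place i i0 d s i = nth d s i0.
Proof. by rewrite ffunE tpermL. Qed.

Lemma ran_place i i0 d s : size s = n -> ran (place i i0 d s) = [set x in s].
Proof.
move=> sz; apply/setP=> x; rewrite inE; apply/imsetP/idP => [[j _ ->]|xs].
  by rewrite ffunE mem_nth // sz ltn_ord.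
have xi : index x s < n by rewrite -sz index_mem.
by exists (tperm i i0 (Ordinal xi)); rewrite // ffunE tpermK nth_index.
Qed.

(* Delta^s_n turns preservation of R by the clone into n-absorption: to relate
   x in u to y in v, use the operation mapping the injective tuple u to x, with
   both tuples reordered so that y sits at the distinguished coordinate. *)
Lemma absorbing_of_DeltaS (F : forall k, {set op A k}) (R : rel A) :
  DeltaS n F -> (forall s, s \in F n -> preserves s R) -> absorbing n R.
Proof.
move=> [i DeltaF] presR u v szu uu nuv uv x y xu yv.
have szv : size v = n by move: uv; rewrite all2E szu => /andP[/eqP].
have yi : index y v < n by rewrite -szv index_mem.
have ranU := ran_place i (Ordinal yi) x szu.
have ranV := ran_place i (Ordinal yi) x szv.
have cardU : #|ran (place i (Ordinal yi) x u)| = n.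
  by rewrite ranU cardsE (card_uniqP uu).
have xU : x \in ran (place i (Ordinal yi) x u) by rewrite ranU inE.
have [s sF [sU sV]] := DeltaF _ cardU x xU.
have := presR s sF (place i (Ordinal yi) x u) (place i (Ordinal yi) x v).
rewrite sU sV ?place_i ?nth_index //.
  by apply=> j; rewrite !ffunE all2_nth // szu.
rewrite ranV cardsE ltn_neqAle -szv card_size andbT.
by apply: contra nuv => /eqP/card_uniqP.
Qed.

End DeltaAbsorption.

Section PairRelation.
Variables (A Q : finType) (H : {set {ffun Q -> A}}) (p q : Q).

Definition pair_rel : rel A := fun a b => [exists h in H, (h p == a) && (h q == b)].

(* Applying an operation of the clone to witnesses in H of related pairs gives
   a member of H witnessing the related images. *)
Lemma pair_rel_preserved (F : forall k, {set op A k}) n (s : op A n) :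
  inInv F H -> s \in F n -> preserves s pair_rel.
Proof.
move=> invH sF u v /(_ _)/existsP uv.
pose w j := odflt [ffun=> u j] [pick h in H | (h p == u j) && (h q == v j)].
have wP j : [/\ w j \in H, w j p = u j & w j q = v j].
  rewrite /w; case: pickP => [h /andP[hH /andP[/eqP-> /eqP->]] //| none].
  by have [h /andP[hH e]] := uv j; move: (none h); rewrite hH e.
have wpu : [ffun j => w j p] = u by apply/ffunP=> j; rewrite ffunE; case: (wP j).
have wqv : [ffun j => w j q] = v by apply/ffunP=> j; rewrite ffunE; case: (wP j).
apply/existsP; exists [ffun r => s [ffun j => w j r]].
rewrite (invH _ _ w sF) => [|j]; last by case: (wP j).
by rewrite !ffunE wpu wqv !eqxx.
Qed.

Lemma proj_rdom : proj H p = rdom pair_rel.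
Proof.
apply/setP=> a; rewrite inE; apply/imsetP/existsP => [[h hH ->]|[b /existsP[h]]].
  by exists (h q); apply/existsP; exists h; rewrite hH !eqxx.
by case/andP=> hH /andP[/eqP<- _]; exists h.
Qed.

Lemma proj_rcod : proj H q = rcod pair_rel.
Proof.
apply/setP=> b; rewrite inE; apply/imsetP/existsP => [[h hH ->]|[a /existsP[h]]].
  by exists (h p); apply/existsP; exists h; rewrite hH !eqxx.
by case/andP=> hH /andP[_ /eqP<-]; exists h.
Qed.

Lemma restr_pair_rel : restr H [set p; q] =
  [set g : {ffun {x : Q | x \in [set p; q]} -> A} | pair_rel (g (pt1 p q)) (g (pt2 p q))].
Proof.
apply/setP=> g; rewrite inE; apply/imsetP/existsP => [[h hH ->]|[h]].
  by exists h; rewrite hH !ffunE !eqxx.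
case/andP=> hH /andP[/eqP gp /eqP gq]; exists h => //.
apply/ffunP=> -[x xpq]; rewrite ffunE /=.
by case/set2P: (xpq) => ex; subst x; [rewrite gp | rewrite gq]; apply/f_equal/val_inj.
Qed.

End PairRelation.

(* Lemma 5. *)
Theorem lemma5 (A Q : finType) (H : {set {ffun Q -> A}}) (n : nat)
    (F : forall k, {set op A k}) (p q : Q) :
  0 < #|A| -> 0 < #|Q| -> H != set0 -> 3 <= n ->
  is_clone F -> DeltaS n F -> inInv F H ->
  p != q -> ~~ ([set p; q] \subset Qn H n) ->
  restr H [set p; q] =
    [set g : {ffun {x : Q | x \in [set p; q]} -> A} | (g (pt1 p q) \in proj H p) && (g (pt2 p q) \in proj H q)]
  \/
  exists sigma : {perm A},
    restr H [set p; q] =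
    [set g : {ffun {x : Q | x \in [set p; q]} -> A} | [&& g (pt1 p q) \in proj H p, g (pt2 p q) \in proj H q
              & g (pt2 p q) == sigma (g (pt1 p q))]].
Proof.
move=> _ _ _ n_ge3 _ DeltaF invH _ not_small.
have presR s : s \in F n -> preserves s (pair_rel H p q).
  exact: pair_rel_preserved invH.
have absR := absorbing_of_DeltaS DeltaF presR.
have absC := absorbing_of_DeltaS DeltaF (fun s sF => preserves_converse (presR s sF)).
have large : n <= #|rdom (pair_rel H p q)| \/ n <= #|rcod (pair_rel H p q)|.
  have [r /set2P[->|->]] := subsetPn not_small; rewrite inE -leqNgt.
    by rewrite (proj_rdom H p q); left.
  by rewrite (proj_rcod H p q); right.
rewrite restr_pair_rel (proj_rdom H p q) (proj_rcod H p q).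
case: (absorbing_product_or_perm_sym n_ge3 absR absC large) => [full|[sigma graph]].
  left; apply/setP=> g; rewrite !inE; apply/idP/andP => [Rg|[gdom gcod]].
    by split; apply/existsP; [exists (g (pt2 p q)) | exists (g (pt1 p q))].
  by apply: full; rewrite inE.
by right; exists sigma; apply/setP=> g; rewrite [in LHS]inE graph !inE.
Qed.
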